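(* Let $(N_0,v)$ be the RS-game corresponding to an RS-situation $(N_0,c,w,P)$, and let $\xi(v)$ be defined by $\xi_0(v)=n\beta$ and $\xi_i(v)=v(\{0,i\})-\beta$ for $i\in N$, where $\beta=\min_{S\subseteq N,\,S\neq\emptyset}\frac{v(S_0)-v(S)}{s}$. Then $\xi(v)\in Core(N_0,v)$ and $\xi_0(v)>0$.
   Context: Let $c\in\mathbb{R}$. An RS-problem is a triple $(c,w,p)$ where $w:\mathbb{R}_+\to(c,+\infty)$ is decreasing (non-increasing) and continuous, and $p:\mathbb{R}_+\to\mathbb{R}$ is decreasing (non-increasing) and continuous, satisfies $p(0)>w(0)$, and there exists $q>0$ with $p(q)=c$. An RS-situation is a tuple $(N_0,c,w,P)$ where $N=\{1,\dots,n\}$ is the set of retailers, $0$ denotes the supplier, $N_0=N\cup\{0\}$, $P=(p_1,\dots,p_n)$, and $(c,w,p_i)$ is an RS-problem for each $i\in N$. For $S\subseteq N$ write $S_0=S\cup\{0\}$ and $s=|S|$. For $q\ge0$ and $\omega\in\mathbb{R}$, $\Pi_i^{ret}(q;\omega)=(p_i(q)-\omega)q$. For nonempty $S\subseteq N$, $(q_i^S)_{i\in S}$ is a fixed optimal solution of: maximize $\sum_{i\in S}(p_i(q_i)-w(q_S))q_i$ over $q\in\mathbb{R}_+^{S}$ subject to $p_i(q_i)\ge w(q_S)$ for all $i\in S$, where $q_S=\sum_{i\in S}q_i$; $q_S^S=\sum_{i\in S}q_i^S$. For $i\in N$, $q_i^c$ is a fixed optimal solution of: maximize $(p_i(q)-c)q$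 over $q\ge0$ subject to $p_i(q)\ge c$. The corresponding RS-game $(N_0,v)$ is the TU game on $N_0$ with $v(\emptyset)=0$ and, for all $S\subseteq N$, $v(S)=\sum_{i\in S}\Pi_i^{ret}(q_i^S;w(q_S^S))$ and $v(S_0)=\sum_{i\in S}\Pi_i^{ret}(q_i^c;c)$. The core is $Core(N_0,v)=\{x\in\mathbb{R}^{N_0}: \sum_{i\in N_0}x_i=v(N_0),\ \sum_{i\in T}x_i\ge v(T)\text{ for all }T\subset N_0\}$. *)

From HB Require Import structures.
From mathcomp Require Import all_boot all_order all_algebra.
From mathcomp Require Import all_classical all_reals all_analysis.
Set Implicit Arguments. Unset Strict Implicit. Unset Printing Implicit Defensive.
Import Order.TTheory GRing.Theory Num.Theory numFieldNormedType.Exports.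
Local Open Scope ring_scope.

Section RS.
Variable R : realType.

Definition nonincr_on_Rplus (f : R -> R) : Prop :=
  forall x y : R, 0 <= x -> x <= y -> f y <= f x.

Local Open Scope classical_set_scope.
Definition cont_on_Rplus (f : R -> R) : Prop :=
  {within [set x : R | 0 <= x], continuous f}.
Local Close Scope classical_set_scope.

Definition RS_problem (c : R) (w p : R -> R) : Prop :=
  [/\ forall x : R, 0 <= x -> c < w x,
      nonincr_on_Rplus w /\ cont_on_Rplus w,
      nonincr_on_Rplus p /\ cont_on_Rplus p,
      w 0 < p 0
    & exists q : R, 0 < q /\ p q = c].

(* RS-situation (N_0, c, w, P) with N = 'I_n, supplier = None *)
Definition RS_situation (n : nat) (c : R) (w : R -> R) (P : 'I_n -> R -> R) : Prop :=
  forall i : 'I_n, RS_problem c w (P i).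

Definition Pi_ret (p : R -> R) (q omega : R) : R := (p q - omega) * q.

Definition feasible_S n (w : R -> R) (P : 'I_n -> R -> R) (S : {set 'I_n})
  (q : 'I_n -> R) : Prop :=
  forall i : 'I_n, i \in S -> 0 <= q i /\ w (\sum_(j in S) q j) <= P i (q i).

Definition obj_S n (w : R -> R) (P : 'I_n -> R -> R) (S : {set 'I_n})
  (q : 'I_n -> R) : R :=
  \sum_(i in S) (P i (q i) - w (\sum_(j in S) q j)) * q i.

Definition optimal_S n (w : R -> R) (P : 'I_n -> R -> R) (S : {set 'I_n})
  (q : 'I_n -> R) : Prop :=
  feasible_S w P S q /\
  forall q' : 'I_n -> R, feasible_S w P S q' -> obj_S w P S q' <= obj_S w P S q.

Definition optimal_c (c : R) (p : R -> R) (q : R) : Prop :=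
  [/\ 0 <= q, c <= p q &
      forall q' : R, 0 <= q' -> c <= p q' -> (p q' - c) * q' <= (p q - c) * q].

Definition retailers n (T : {set option 'I_n}) : {set 'I_n} :=
  [set i : 'I_n | Some i \in T].

(* The RS-game: qS S is the fixed optimal solution for S (entries outside S
   are irrelevant), qc i is the fixed optimal solution at price c. *)
Definition RS_game n (c : R) (w : R -> R) (P : 'I_n -> R -> R)
  (qS : {set 'I_n} -> 'I_n -> R) (qc : 'I_n -> R)
  (T : {set option 'I_n}) : R :=
  let S := retailers T in
  if None \in T then \sum_(i in S) Pi_ret (P i) (qc i) c
  else \sum_(i in S) Pi_ret (P i) (qS S i) (w (\sum_(j in S) qS S j)).

Definition in_core n (v : {set option 'I_n} -> R) (x : option 'I_n -> R) : Prop :=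
  \sum_(k : option 'I_n) x k = v [set: option 'I_n] /\
  forall T : {set option 'I_n}, T \proper [set: option 'I_n] ->
    v T <= \sum_(k in T) x k.

(* beta = min over nonempty S of (v(S_0) - v(S)) / s; the big min is seeded
   with the value at S = N, which is itself one of the terms when n > 0. *)
Definition beta n (v : {set option 'I_n} -> R) : R :=
  let f := fun S : {set 'I_n} =>
    (v (None |: [set Some i | i in S]) - v [set Some i | i in S]) / #|S|%:R in
  \big[Order.min/f [set: 'I_n]]_(S : {set 'I_n} | S != finset.set0) f S.

Definition xi n (v : {set option 'I_n} -> R) (k : option 'I_n) : R :=
  match k with
  | None => n%:R * beta v
  | Some i => v [set None; Some i] - beta v
  end.

End RS.

(** Every retailer earns strictly more when buying at the production cost [c]
    than when the coalition buys at the wholesale price [w(q_S) > c], so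
    [v(S_0) - v(S) > 0] for every nonempty [S] and hence [beta > 0]. A
    coalition containing the supplier gets [v(S_0) = sum_(i in S) v({0,i})],
    which [xi] pays it with [n beta - s beta >= 0] to spare; a coalition [S]
    of retailers alone gets [v(S_0) - s beta >= v(S)] by minimality of
    [beta]. *)
From mathcomp Require Import all_boot all_order all_algebra.
From mathcomp Require Import all_classical all_reals all_analysis.
Set Implicit Arguments. Unset Strict Implicit. Unset Printing Implicit Defensive.
Import Order.TTheory GRing.Theory Num.Theory numFieldNormedType.Exports.
Local Open Scope ring_scope.

Lemma cont_on_Rplus_gt_point (R : realType) (p : R -> R) (c : R) :
  cont_on_Rplus p -> c < p 0 -> exists2 x, 0 < x & c < p x.
Proof.
move=> p_cont cp0.
have := p_cont (0 : subspace [set x : R | 0 <= x]%classic).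
rewrite /from_subspace => /cvgr_gt /(_ c cp0).
rewrite /= {1}/nbhs /= -nbhs_subspace_in /= ?lexx //.
rewrite /within /= => /nbhs_ballP [e /= e_gt0 near0].
have e2_gt0 : 0 < e / 2 by rewrite divr_gt0.
exists (e / 2) => //; apply: near0; last exact: ltW.
rewrite -ball_normE /= sub0r normrN gtr0_norm //.
by rewrite ltr_pdivrMr // ltr_pMr // ltr1n.
Qed.

Section OptionSets.
Variable I : finType.

Lemma notin_None_imset_Some (S : {set I}) : None \notin [set Some i | i in S].
Proof. by apply/imsetP => -[]. Qed.

Lemma mem_imset_Some (S : {set I}) i : (Some i \in [set Some j | j in S]) = (i \in S).
Proof. exact/mem_imset/Some_inj. Qed.

Lemma imset_Some_inj (S : {set I}) : {in S &, injective (@Some I)}.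
Proof. by move=> i j _ _ []. Qed.

Lemma setT_option : [set: option I] = None |: [set Some i | i in [set: I]].
Proof. by apply/setP => -[i|]; rewrite !inE ?mem_imset_Some ?inE ?eqxx. Qed.

Lemma option_set_ind (Q : {set option I} -> Prop) :
  (forall S : {set I}, Q [set Some i | i in S]) ->
  (forall S : {set I}, Q (None |: [set Some i | i in S])) ->
  forall T, Q T.
Proof.
move=> QS QNS T; pose S := [set i | Some i \in T].
have memS i : (Some i \in [set Some j | j in S]) = (Some i \in T).
  by rewrite mem_imset_Some inE.
have [NT | NnT] := boolP (None \in T).
  have -> : T = None |: [set Some i | i in S]; last exact: QNS.
  by apply/setP => -[i|]; rewrite in_setU1 ?memS // eqxx NT.
have -> : T = [set Some i | i in S]; last exact: QS.
by apply/setP => -[i|]; rewrite ?memS // (negbTE NnT) (negbTE (notin_None_imset_Some _)).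
Qed.

Variable V : nmodType.
Variable F : option I -> V.

Lemma sum_imset_Some (S : {set I}) :
  \sum_(k in [set Some i | i in S]) F k = \sum_(i in S) F (Some i).
Proof. exact/big_imset/imset_Some_inj. Qed.

Lemma sum_setU1_None (S : {set I}) :
  \sum_(k in None |: [set Some i | i in S]) F k = F None + \sum_(i in S) F (Some i).
Proof. by rewrite big_setU1 ?notin_None_imset_Some //= sum_imset_Some. Qed.

Lemma sum_option : \sum_k F k = F None + \sum_(i in [set: I]) F (Some i).
Proof. by rewrite -sum_setU1_None -setT_option; apply: eq_bigl => k; rewrite inE. Qed.

End OptionSets.

Lemma retailers_imset_Some n (S : {set 'I_n}) : retailers [set Some i | i in S] = S.
Proof. by apply/setP => i; rewrite inE mem_imset_Some. Qed.

Lemma retailers_setU1_None n (S : {set 'I_n}) :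
  retailers (None |: [set Some i | i in S]) = S.
Proof. by apply/setP => i; rewrite inE in_setU1 /= mem_imset_Some. Qed.

Section SupplierGames.
Variables (R : realType) (n : nat) (v : {set option 'I_n} -> R).

Local Notation S0 S := (None |: [set Some i | i in S]).

Lemma beta_le_ratio (S : {set 'I_n}) : S != finset.set0 ->
  beta v <= (v (S0 S) - v [set Some i | i in S]) / #|S|%:R.
Proof. by move=> S_neq0; apply: bigmin_le_cond. Qed.

Lemma beta_gt0 : (0 < n)%N ->
  (forall S : {set 'I_n}, S != finset.set0 -> v [set Some i | i in S] < v (S0 S)) ->
  0 < beta v.
Proof.
move=> n_gt0 v_lt.
have ratio_gt0 (S : {set 'I_n}) : S != finset.set0 ->
    0 < (v (S0 S) - v [set Some i | i in S]) / #|S|%:R.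
  by move=> S_neq0; rewrite divr_gt0 ?subr_gt0 ?v_lt // ltr0n card_gt0.
apply: lt_bigmin => [|S]; last exact: ratio_gt0.
by apply: ratio_gt0; apply/set0Pn; exists (Ordinal n_gt0).
Qed.

Lemma xi_in_core :
  v finset.set0 = 0 ->
  (forall S : {set 'I_n}, v (S0 S) = \sum_(i in S) v [set None; Some i]) ->
  0 <= beta v -> in_core v (xi v).
Proof.
move=> v0 v_additive beta_ge0.
have sum_xi (S : {set 'I_n}) : \sum_(i in S) xi v (Some i) = v (S0 S) - beta v *+ #|S|.
  by rewrite sumrB sumr_const -v_additive.
split.
  rewrite sum_option setT_option sum_xi cardsT card_ord /=.
  by rewrite mulr_natl addrC subrK.
move=> T _; elim/option_set_ind: T => S.
  have [-> | S_neq0] := eqVneq S finset.set0; first by rewrite imset0 v0 big_set0.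
  rewrite sum_imset_Some sum_xi.
  have := beta_le_ratio S_neq0.
  rewrite ler_pdivlMr ?ltr0n ?card_gt0 // mulr_natr => le_beta.
  by rewrite lerBrDr addrC -lerBrDr.
rewrite sum_setU1_None sum_xi /= addrCA lerDl subr_ge0 -[beta v *+ _]mulr_natl.
by apply: ler_wpM2r => //; rewrite ler_nat -[X in (_ <= X)%N]card_ord max_card.
Qed.

End SupplierGames.

Lemma optimal_c_profit_gt0 (R : realType) (c : R) (w p : R -> R) (q : R) :
  RS_problem c w p -> optimal_c c p q -> 0 < Pi_ret p q c.
Proof.
move=> [w_gt_c _ [_ p_cont] wp0 _] [_ _ q_opt].
have [x x_gt0 cpx] := cont_on_Rplus_gt_point p_cont (lt_trans (w_gt_c 0 (lexx _)) wp0).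
by apply: lt_le_trans (q_opt x (ltW x_gt0) (ltW cpx)); rewrite mulr_gt0 ?subr_gt0.
Qed.

Lemma Pi_ret_lt_optimal_c (R : realType) (c omega : R) (p : R -> R) (q qc : R) :
  c < omega -> 0 <= q -> omega <= p q -> optimal_c c p qc ->
  0 < Pi_ret p qc c -> Pi_ret p q omega < Pi_ret p qc c.
Proof.
move=> c_lt_omega q_ge0 omega_le [_ _ qc_opt] profit_gt0.
have [-> | q_neq0] := eqVneq q 0; first by rewrite /Pi_ret mulr0.
apply: lt_le_trans (qc_opt q q_ge0 (ltW (lt_le_trans c_lt_omega omega_le))).
by rewrite ltr_pM2r ?ltrD2l ?ltrN2 // lt_def q_neq0.
Qed.

Section RSGame.
Variables (R : realType) (n : nat) (c : R) (w : R -> R) (P : 'I_n -> R -> R).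
Variables (qS : {set 'I_n} -> 'I_n -> R) (qc : 'I_n -> R).

Local Notation v := (RS_game c w P qS qc).

Lemma RS_game0 : v finset.set0 = 0.
Proof. by rewrite /RS_game inE big_pred0 // => i; rewrite !inE. Qed.

Lemma RS_game_supplier (S : {set 'I_n}) :
  v (None |: [set Some i | i in S]) = \sum_(i in S) Pi_ret (P i) (qc i) c.
Proof. by rewrite /RS_game setU11 retailers_setU1_None. Qed.

Lemma RS_game_supplier_additive (S : {set 'I_n}) :
  v (None |: [set Some i | i in S]) = \sum_(i in S) v [set None; Some i].
Proof.
rewrite RS_game_supplier; apply: eq_bigr => i _.
by rewrite -imset_set1 RS_game_supplier big_set1.
Qed.

Hypothesis RS_sit : RS_situation c w P.
Hypothesis qS_opt : forall S : {set 'I_n}, S != finset.set0 -> optimal_S w P S (qS S).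
Hypothesis qc_opt : forall i : 'I_n, optimal_c c (P i) (qc i).

Lemma RS_game_retailers_lt (S : {set 'I_n}) : S != finset.set0 ->
  v [set Some i | i in S] < v (None |: [set Some i | i in S]).
Proof.
move=> S_neq0; have [qS_feas _] := qS_opt S_neq0.
rewrite RS_game_supplier /RS_game (negbTE (notin_None_imset_Some _)) retailers_imset_Some.
have q_ge0 : 0 <= \sum_(j in S) qS S j by apply: sumr_ge0 => j /qS_feas[].
have [k kS] := set0Pn _ S_neq0.
have [w_gt_c _ _ _ _] := RS_sit k.
apply: ltr_sum => [|i iS]; first by apply/hasP; exists k; rewrite ?mem_index_enum.
have [qi_ge0 w_le_p] := qS_feas i iS.
apply: Pi_ret_lt_optimal_c (w_gt_c _ q_ge0) qi_ge0 w_le_p (qc_opt i) _.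
exact: optimal_c_profit_gt0 (RS_sit i) (qc_opt i).
Qed.

End RSGame.

Theorem lemma6p2 (R : realType) (n : nat) (c : R) (w : R -> R)
  (P : 'I_n -> R -> R) (qS : {set 'I_n} -> 'I_n -> R) (qc : 'I_n -> R) :
  (0 < n)%N ->
  RS_situation c w P ->
  (forall S : {set 'I_n}, S != finset.set0 -> optimal_S w P S (qS S)) ->
  (forall i : 'I_n, optimal_c c (P i) (qc i)) ->
  let v := RS_game c w P qS qc in
  in_core v (xi v) /\ 0 < xi v None.
Proof.
move=> n_gt0 RS_sit qS_opt qc_opt v.
have beta_pos : 0 < beta v.
  exact: beta_gt0 n_gt0 (RS_game_retailers_lt RS_sit qS_opt qc_opt).
split; last by rewrite /= mulr_gt0 ?ltr0n.
apply: xi_in_core (ltW beta_pos); first exact: RS_game0.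
exact: RS_game_supplier_additive.
Qed.
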